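(* Let $\alpha$ be a cylindric partition on $\mathcal C_{k,n}$ and $m$ a nonnegative integer. Let $M$ be the set of cylindric partitions $\mu\subseteq\alpha$ such that $\alpha/\mu$ contains exactly $m$ boxes, and $\Lambda$ the set of cylindric partitions $\lambda\supseteq\alpha$ such that $\lambda/\alpha$ contains exactly $m$ boxes. Then \[ \sum_{\mu\in M}f_{\alpha/\mu}=\sum_{\lambda\in\Lambda}f_{\lambda/\alpha}. \]
   Context: Fix integers $n>k\ge1$. A cylindric partition is a weakly decreasing integer sequence $(\lambda_m)_{m\in\mathbb Z}$ with $\lambda_m=\lambda_{m+k}+n-k$. A point $(x,y)\in\mathbb Z^2$ lies in $\lambda$ if $y\le\lambda_x$. Boxes are classes of points modulo translation by multiples of $(-k,n-k)$; $\pi$ the projection; a box lies in $\lambda$ iff its representatives do. $\mu\subseteq\lambda$ means $\mu_m\le\lambda_m$ for all $m$; boxes of $\lambda/\mu$ are boxes in $\lambda$ not in $\mu$. A semistandard cylindric tableau of shape $\lambda/\mu$ with values in a totally ordered set is a map $R$ from boxes of $\lambda/\mu$ to it with $R(\pi(x,y_1))\le R(\pi(x,y_2))$ whenever $(x,y_1),(x,y_2)$ lie in $\lambda$ but not $\mu$ and $y_1<y_2$, and $R(\pi(x_1,y))<R(\pi(x_2,y))$ whenever $(x_1,y),(x_2,y)$ lie in $\lambda$ but not $\mu$ and $x_1<x_2$. A standard cylindric tableau takes values in $\{1,\dots,N\}$ for some $N\ge0$ with each value used exactly once; $f_{\lambda/\mu}$ is the number of standard cylindric tableaux of shape $\lambda/\mu$.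 *)

From HB Require Import structures.
From mathcomp Require Import all_boot all_order all_algebra.
From mathcomp Require Import boolp classical_sets fsbigop.
Set Implicit Arguments. Unset Strict Implicit. Unset Printing Implicit Defensive.
Import Order.TTheory GRing.Theory Num.Theory.
Local Open Scope ring_scope.

Definition cylindric (k n : nat) (lam : int -> int) : Prop :=
  (forall m : int, lam (m + 1) <= lam m) /\
  (forall m : int, lam m = lam (m + k%:Z) + (n%:Z - k%:Z)).

Definition subpart (mu lam : int -> int) : Prop := forall m : int, mu m <= lam m.

Definition in_part (lam : int -> int) (p : int * int) : bool := p.2 <= lam p.1.

Definition in_skew (lam mu : int -> int) (p : int * int) : bool :=
  in_part lam p && ~~ in_part mu p.

(* projection pi of a point to its box, represented by the unique point of
   its class (modulo translations by multiples of (-k, n-k)) whose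
   x-coordinate lies in {0, ..., k-1} *)
Definition proj (k n : nat) (p : int * int) : int * int :=
  let j := (p.1 %/ k%:Z)%Z in (p.1 - j * k%:Z, p.2 + j * (n%:Z - k%:Z)).

(* The boxes of lam/mu, listed by their canonical representatives
   (column x in {0,...,k-1}, mu_x < y <= lam_x). *)
Definition skew_boxes (k : nat) (lam mu : int -> int) : seq (int * int) :=
  flatten [seq [seq p <- [seq (i%:Z, mu i%:Z + (j.+1)%:Z) | j <- iota 0 `|lam i%:Z - mu i%:Z|%N]
               | in_skew lam mu p]
          | i <- iota 0 k].

Definition nboxes (k : nat) (lam mu : int -> int) : nat := size (skew_boxes k lam mu).

(* A standard cylindric tableau of shape lam/mu with N = nboxes boxes is a
   map R from the boxes to {1,...,N} using each value exactly once; we encode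
   the box number i (i-th element of skew_boxes) and the value v+1 by the
   ordinal v : 'I_N. *)
Definition tab_val (k n : nat) (lam mu : int -> int)
  (R : {ffun 'I_(nboxes k lam mu) -> 'I_(nboxes k lam mu)}) (p : int * int) : nat :=
  match insub (index (proj k n p) (skew_boxes k lam mu)) with
  | Some i => (R i).+1
  | None => 0%N
  end.

Definition standard_tableau (k n : nat) (lam mu : int -> int)
  (R : {ffun 'I_(nboxes k lam mu) -> 'I_(nboxes k lam mu)}) : Prop :=
  injective R /\
  (forall x y1 y2 : int, in_skew lam mu (x, y1) -> in_skew lam mu (x, y2) -> y1 < y2 ->
     (tab_val n R (x, y1) <= tab_val n R (x, y2))%N) /\
  (forall x1 x2 y : int, in_skew lam mu (x1, y) -> in_skew lam mu (x2, y) -> x1 < x2 ->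
     (tab_val n R (x1, y) < tab_val n R (x2, y))%N).

Definition f_skew (k n : nat) (lam mu : int -> int) : nat :=
  #|[set R : {ffun 'I_(nboxes k lam mu) -> 'I_(nboxes k lam mu)}
        | `[< standard_tableau n R >] ]|.

From Pilot Require Import Defs.
From HB Require Import structures.
From mathcomp Require Import all_boot all_order all_algebra.
From mathcomp Require Import boolp classical_sets fsbigop.
From mathcomp Require Import cardinality.
From mathcomp Require Import zify.
Import Order.TTheory GRing.Theory Num.Theory.
Local Open Scope ring_scope.

(* Let nu + e_j and nu - e_j add, resp. remove, one box in every column congruent
   to j modulo k.  For cylindric nu these shapes are cylindric exactly when nu has
   an addable, resp. removable, corner in column j, and by periodicity both kinds
   of corners sit at the strict descents of nu over one period, so nu has as many
   addable as removable corners.  Hence the operators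
   U phi nu = sum_j phi (nu + e_j) and D phi nu = sum_j phi (nu - e_j) commute
   exactly on cylindric partitions: in D U and U D the off-diagonal terms agree and
   the diagonal terms count removable, resp. addable, corners.  The largest entry
   of a standard tableau of shape lam/mu occupies a removable corner of lam, so
   f_{lam/mu} = sum_j f_{(lam - e_j)/mu}.  By induction on m the left-hand side of
   the theorem is (D^m 1)(alpha) and the right-hand side is (U^m 1)(alpha), and
   D^m 1 = U^m 1 because D 1 = U 1 and D commutes with U. *)

Set Implicit Arguments. Unset Strict Implicit. Unset Printing Implicit Defensive.

Lemma big_diag_split (I : finType) (j : I) (P Q : pred I) (F : I -> nat) :
  Q j -> (forall i, i != j -> Q i -> P i) ->
  \sum_(i | P i && Q i) F i = ((if P j then F j else 0) + \sum_(i | (i != j) && Q i) F i)%N.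
Proof.
move=> Qj PQ; rewrite (bigID (pred1 j)) /=; congr (_ + _).
  rewrite (eq_bigl (fun i => P j && (i == j))) => [|i]; last first.
    by case: eqP => [->|]; rewrite ?Qj ?andbF ?andbT.
  by case: (P j); [rewrite (big_pred1 j) | rewrite big_pred0].
apply: eq_bigl => i /=; case: (boolP (i == j)) => ne; rewrite /= ?andbF // andbT.
by case: (boolP (Q i)) => Qi; rewrite ?andbF ?(PQ i ne Qi).
Qed.

Section CylindricTableaux.
Variables (k n : nat).

Local Notation cyl := (cylindric k n).
Local Notation d := (n%:Z - k%:Z).

Lemma cylindric_shift nu (t : int) x : cyl nu -> nu (x + t * k%:Z) = nu x - t * d.
Proof.
move=> c; have shiftn (m : nat) y : nu (y + m%:Z * k%:Z) = nu y - m%:Z * d.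
  elim: m y => [|m IH] y; first by rewrite !mul0r addr0 subr0.
  have -> : y + (m.+1)%:Z * k%:Z = (y + m%:Z * k%:Z) + k%:Z.
    by rewrite -addn1 PoszD mulrDl mul1r addrA.
  have -> : (m.+1)%:Z * d = m%:Z * d + d by rewrite -addn1 PoszD mulrDl mul1r.
  by have := c.2 (y + m%:Z * k%:Z); rewrite IH => h; rewrite opprD addrA h addrK.
case: t => m; first exact: shiftn.
have := shiftn m.+1 (x - (m.+1)%:Z * k%:Z); rewrite subrK NegzE !mulNr => ->.
by rewrite opprK subrK.
Qed.

Lemma cylindric_modE nu x : cyl nu -> nu x = nu (x %% k%:Z)%Z - (x %/ k%:Z)%Z * d.
Proof. by move=> c; rewrite -cylindric_shift // addrC -divz_eq. Qed.

Lemma cylindric_diff_mod lam mu x : cyl lam -> cyl mu ->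
  lam x - mu x = lam (x %% k%:Z)%Z - mu (x %% k%:Z)%Z.
Proof. by move=> cl cm; rewrite (cylindric_modE x cl) (cylindric_modE x cm); lia. Qed.

Lemma cylindric_le nu x y : cyl nu -> x <= y -> nu y <= nu x.
Proof.
move=> c xy; have [m ->] : exists m : nat, y = x + m%:Z by exists `|y - x|%N; lia.
elim: m => [|m IH]; first by rewrite addr0.
by apply: le_trans IH; have := c.1 (x + m%:Z); rewrite -addrA -(PoszD m 1) addn1.
Qed.

Lemma cylindric_descent_shift nu x t : cyl nu ->
  (nu (x + t * k%:Z + 1) < nu (x + t * k%:Z)) = (nu (x + 1) < nu x).
Proof. by move=> c; rewrite addrAC !(cylindric_shift _ _ c) ltrD2r. Qed.

Lemma cylindric_k1 nu x : cyl nu -> k = 1%N -> nu (x + 1) = nu x - d.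
Proof. by move=> c k1; have := cylindric_shift 1 x c; rewrite k1 !mul1r. Qed.

Definition col_ind (j : nat) (x : int) : int := if (x %% k%:Z)%Z == j%:Z then 1 else 0.
Definition add_box (nu : int -> int) j x := nu x + col_ind j x.
Definition remove_box (nu : int -> int) j x := nu x - col_ind j x.

Lemma col_indP j x : col_ind j x = 0 \/ col_ind j x = 1.
Proof. by rewrite /col_ind; case: ifP; [right|left]. Qed.

Lemma col_ind_shift j x t : col_ind j (x + t * k%:Z) = col_ind j x.
Proof. by rewrite /col_ind addrC modzMDl. Qed.

Lemma col_ind_periodic j x : col_ind j (x + k%:Z) = col_ind j x.
Proof. by have := col_ind_shift j x 1; rewrite mul1r. Qed.

Lemma col_ind_nat j (i : nat) : (i < k)%N -> col_ind j i%:Z = (i == j)%:R.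
Proof. by move=> ik; rewrite /col_ind modz_small; [case: eqP; case: eqP; lia | lia]. Qed.

Lemma col_ind_eq1 j x : col_ind j x = 1 -> x = j%:Z + (x %/ k%:Z)%Z * k%:Z.
Proof. by rewrite /col_ind; case: eqP => // h _; rewrite {1}(divz_eq x k%:Z) h addrC. Qed.

Lemma col_ind_adj j x : col_ind j x = 1 -> col_ind j (x + 1) = 1 -> k = 1%N.
Proof.
rewrite /col_ind; case: eqP => // h1 _; case: eqP => // h2 _.
have : ((x + 1) == x %[mod k%:Z])%Z by apply/eqP; rewrite h1 h2.
rewrite eqz_mod_dvd addrC addKr dvdz1; lia.
Qed.

Lemma col_ind_self j : (j < k)%N -> col_ind j j%:Z = 1.
Proof. by move=> jk; rewrite col_ind_nat // eqxx. Qed.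

Lemma col_ind_other i j : (i < k)%N -> i != j -> col_ind j i%:Z = 0.
Proof. by move=> ik /negbTE ne; rewrite col_ind_nat // ne. Qed.

Lemma remove_boxK nu j : add_box (remove_box nu j) j = nu.
Proof. by apply/funext => x; rewrite /add_box /remove_box subrK. Qed.

Lemma add_boxK nu j : remove_box (add_box nu j) j = nu.
Proof. by apply/funext => x; rewrite /add_box /remove_box addrK. Qed.

Lemma add_remove_boxC nu i j : add_box (remove_box nu j) i = remove_box (add_box nu i) j.
Proof. by apply/funext => x; rewrite /add_box /remove_box addrAC. Qed.

Lemma add_box_inj j : injective (add_box^~ j).
Proof. by move=> a b e; apply/funext => x; have /addIr := congr1 (fun f => f x) e. Qed.

Section Corners.
Hypotheses (k_gt0 : (0 < k)%N) (k_lt_n : (k < n)%N).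

Lemma cylindric_remove_box nu j : cyl nu -> (j < k)%N ->
  cyl (remove_box nu j) <-> nu (j%:Z + 1) < nu j%:Z.
Proof.
move=> c jk; split => [[dec _]|hj].
  have := dec j%:Z; rewrite /remove_box col_ind_self //.
  case: (col_indP j (j%:Z + 1)) => [->|/(col_ind_adj (col_ind_self jk)) k1]; first lia.
  by rewrite (cylindric_k1 _ c k1); lia.
have strict x : col_ind j x = 1 -> nu (x + 1) < nu x.
  by move=> /col_ind_eq1 ->; rewrite cylindric_descent_shift.
split=> x; rewrite /remove_box; last by rewrite col_ind_periodic; have := c.2 x; lia.
have := c.1 x; case: (col_indP j x) => cx; [|have := strict x cx];
  case: (col_indP j (x + 1)); lia.
Qed.

Lemma cylindric_add_box nu j : cyl nu -> (j < k)%N ->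
  cyl (add_box nu j) <-> nu j%:Z < nu (j%:Z - 1).
Proof.
move=> c jk; split => [[dec _]|hj].
  have := dec (j%:Z - 1); rewrite /add_box subrK col_ind_self //.
  case: (col_indP j (j%:Z - 1)) => [->|cj]; first lia.
  have k1 : k = 1%N by apply: (col_ind_adj cj); rewrite subrK col_ind_self.
  by have := cylindric_k1 (j%:Z - 1) c k1; rewrite subrK; lia.
have strict (x : int) : col_ind j (x + 1) = 1 -> nu (x + 1) < nu x.
  move=> /col_ind_eq1 ex1.
  have -> : x = j%:Z - 1 + ((x + 1) %/ k%:Z)%Z * k%:Z by lia.
  by rewrite cylindric_descent_shift // subrK.
split=> x; rewrite /add_box; last by rewrite col_ind_periodic; have := c.2 x; lia.
have := c.1 x; case: (col_indP j (x + 1)) => cx; [|have := strict x cx];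
  case: (col_indP j x) => cx2; rewrite cx cx2; lia.
Qed.

Lemma cylindric_remove_boxE nu j : cyl nu -> (j < k)%N ->
  `[< cyl (remove_box nu j) >] = (nu (j%:Z + 1) < nu j%:Z).
Proof. by move=> c jk; apply/asbool_equiv_eqP/cylindric_remove_box => //; apply: idP. Qed.

Lemma cylindric_add_boxE nu j : cyl nu -> (j < k)%N ->
  `[< cyl (add_box nu j) >] = (nu j%:Z < nu (j%:Z - 1)).
Proof. by move=> c jk; apply/asbool_equiv_eqP/cylindric_add_box => //; apply: idP. Qed.

Lemma cylindric_remove_of_add_remove nu i j : cyl nu -> (i < k)%N -> (j < k)%N -> i != j ->
  cyl (remove_box (add_box nu i) j) -> cyl (remove_box nu j).
Proof.
move=> c ik jk ne [dec _]; apply/cylindric_remove_box => //.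
have := dec j%:Z; rewrite /remove_box /add_box col_ind_self // col_ind_other // 1?eq_sym //.
case: (col_indP j (j%:Z + 1)) => [->|/(col_ind_adj (col_ind_self jk)) k1].
  by case: (col_indP i (j%:Z + 1)) => ->; lia.
by move: ne; rewrite k1 in ik jk; lia.
Qed.

Lemma cylindric_add_of_add_remove nu i j : cyl nu -> (i < k)%N -> (j < k)%N -> i != j ->
  cyl (remove_box (add_box nu i) j) -> cyl (add_box nu i).
Proof.
move=> c ik jk ne [dec _]; apply/cylindric_add_box => //.
have := dec (i%:Z - 1); rewrite /remove_box /add_box subrK col_ind_self // col_ind_other //.
case: (col_indP i (i%:Z - 1)) => [->|ci].
  by case: (col_indP j (i%:Z - 1)) => ->; lia.
have k1 : k = 1%N by apply: (col_ind_adj ci); rewrite subrK col_ind_self.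
by move: ne; rewrite k1 in ik jk; lia.
Qed.

(* Both sides count the strict descents nu (x + 1) < nu x over one period:
   removable corners at x = 0, ..., k - 1, addable ones at x = -1, ..., k - 2. *)
Lemma sum_removable_addable nu (a : nat) : cyl nu ->
  \sum_(j < k | `[< cyl (remove_box nu j) >]) a = \sum_(j < k | `[< cyl (add_box nu j) >]) a.
Proof.
move=> c; rewrite big_mkcond [RHS]big_mkcond /=.
under eq_bigr => j _ do rewrite (cylindric_remove_boxE c (ltn_ord j)).
under [RHS]eq_bigr => j _ do rewrite (cylindric_add_boxE c (ltn_ord j)).
have [k' kk] : exists k', k = k'.+1 by exists k.-1; lia.
rewrite kk big_ord_recr big_ord_recl /= addrC; congr (_ + _).
  have e1 : nu (-1) = nu k'%:Z + d.
    by have := c.2 (-1); rewrite kk; have -> : -1 + k'.+1%:Z = k'%:Z by lia.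
  have e0 : nu 0 = nu (k'%:Z + 1) + d by have := c.2 0; rewrite kk add0r -addn1 PoszD.
  by rewrite sub0r e1 e0 ltrD2r.
by apply: eq_bigr => i _ /=; rewrite /bump /= add1n -addn1 PoszD addrK.
Qed.

Definition up (phi : (int -> int) -> nat) (nu : int -> int) : nat :=
  \sum_(j < k | `[< cyl (add_box nu j) >]) phi (add_box nu j).
Definition down (phi : (int -> int) -> nat) (nu : int -> int) : nat :=
  \sum_(j < k | `[< cyl (remove_box nu j) >]) phi (remove_box nu j).

Section UpDown.
Variables (phi : (int -> int) -> nat) (nu : int -> int).
Hypothesis c : cyl nu.

Local Notation g i j := (phi (remove_box (add_box nu i) j)).
Local Notation q i j := `[< cyl (remove_box (add_box nu i) j) >].

Lemma down_up_split : down (up phi) nu =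
  (\sum_(j < k | `[< cyl (remove_box nu j) >]) phi nu +
   \sum_(j < k) \sum_(i < k | (i != j) && q i j) g i j)%N.
Proof.
rewrite /down /up big_mkcond [X in (X + _)%N]big_mkcond -big_split /=.
apply: eq_bigr => j _.
transitivity (\sum_(i < k | `[< cyl (remove_box nu j) >] && q i j) g i j).
  case: ifP => rj /=; last by rewrite big_pred0.
  by apply: eq_big => [i|i _]; rewrite add_remove_boxC.
rewrite (big_diag_split (j := j)) ?add_boxK //; first exact: asboolT.
move=> i ne /asboolW qij; apply: asboolT.
exact: cylindric_remove_of_add_remove c (ltn_ord i) (ltn_ord j) ne qij.
Qed.

Lemma up_down_split : up (down phi) nu =
  (\sum_(j < k | `[< cyl (add_box nu j) >]) phi nu +
   \sum_(j < k) \sum_(i < k | (i != j) && q i j) g i j)%N.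
Proof.
rewrite /down /up (exchange_big_dep xpredT) //= [X in (X + _)%N]big_mkcond -big_split /=.
apply: eq_bigr => j _; rewrite (big_diag_split (j := j)) ?add_boxK //; first exact: asboolT.
move=> i ne /asboolW qij; apply: asboolT.
exact: cylindric_add_of_add_remove c (ltn_ord i) (ltn_ord j) ne qij.
Qed.

Lemma down_upC : down (up phi) nu = up (down phi) nu.
Proof. by rewrite down_up_split up_down_split sum_removable_addable. Qed.

End UpDown.

Lemma eq_up phi psi : (forall nu, cyl nu -> phi nu = psi nu) ->
  forall nu, cyl nu -> up phi nu = up psi nu.
Proof. by move=> e nu _; apply: eq_bigr => j /asboolW; apply: e. Qed.

Lemma eq_down phi psi : (forall nu, cyl nu -> phi nu = psi nu) ->
  forall nu, cyl nu -> down phi nu = down psi nu.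
Proof. by move=> e nu _; apply: eq_bigr => j /asboolW; apply: e. Qed.

Lemma eq_iter_up m phi psi : (forall nu, cyl nu -> phi nu = psi nu) ->
  forall nu, cyl nu -> iter m up phi nu = iter m up psi nu.
Proof. by move=> e; elim: m => [|m IH] /=; [exact: e | exact: eq_up]. Qed.

Lemma down_iter_up b phi nu : cyl nu -> down (iter b up phi) nu = iter b up (down phi) nu.
Proof. by elim: b nu => [|b IH] nu c //=; rewrite down_upC //; apply: eq_up. Qed.

Lemma iter_down_iter_up1 a b nu : cyl nu ->
  iter a down (iter b up (fun=> 1%N)) nu = iter (a + b) up (fun=> 1%N) nu.
Proof.
elim: a b nu => [|a IH] b nu c //=.
rewrite (eq_down (psi := iter (a + b) up (fun=> 1%N))) //; last by move=> ? ?; apply: IH.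
rewrite down_iter_up // -iterS iterSr; apply: eq_iter_up => // mu cm.
exact: sum_removable_addable.
Qed.

Lemma iter_down_up1 m nu : cyl nu -> iter m down (fun=> 1%N) nu = iter m up (fun=> 1%N) nu.
Proof. by move=> c; rewrite -[in RHS](addn0 m) -iter_down_iter_up1. Qed.

End Corners.

Local Notation proj := (proj k n).

Definition skew_col (lam mu : int -> int) (i : nat) : seq (int * int) :=
  [seq p <- [seq (i%:Z, mu i%:Z + (j.+1)%:Z) | j <- iota 0 `|lam i%:Z - mu i%:Z|%N]
     | in_skew lam mu p].

Lemma skew_boxesE lam mu : skew_boxes k lam mu = flatten [seq skew_col lam mu i | i <- iota 0 k].
Proof. by []. Qed.

Lemma mem_skew_col lam mu i c : c \in skew_col lam mu i -> c.1 = i%:Z /\ in_skew lam mu c.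
Proof. by rewrite mem_filter => /andP[h /mapP[t _ e]]; rewrite e in h *. Qed.

Lemma mem_skew_boxes lam mu c :
  (c \in skew_boxes k lam mu) = [&& 0 <= c.1, c.1 < k%:Z & in_skew lam mu c].
Proof.
apply/idP/idP.
  move/flattenP => [s /mapP[i hi ->] hc]; have [e h] := mem_skew_col hc.
  by rewrite e h mem_iota in hi *; rewrite andbT; lia.
case: c => x y /= /and3P[h0 h1 hs]; apply/flattenP.
exists (skew_col lam mu `|x|%N); first by apply/mapP; exists `|x|%N => //; rewrite mem_iota; lia.
have ex : `|x|%N%:Z = x by lia.
rewrite /skew_col mem_filter ex hs /=; apply/mapP.
move: hs; rewrite /in_skew /in_part /= => /andP[h2 h3].
by exists (absz (y - mu x - 1)%R); [rewrite mem_iota; lia | congr (_, _); lia].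
Qed.

Lemma uniq_skew_cols lam mu m r : uniq (flatten [seq skew_col lam mu i | i <- iota m r]).
Proof.
elim: r m => [|r IH] m //=; rewrite cat_uniq IH andbT; apply/andP; split.
  by rewrite filter_uniq // map_inj_uniq ?iota_uniq // => t1 t2 [] /addrI [].
apply/hasPn => c /flattenP[s /mapP[i hi ->] hc]; apply/negP => /mem_skew_col [e _].
by have [e' _] := mem_skew_col hc; rewrite mem_iota in hi; lia.
Qed.

Lemma uniq_skew_boxes lam mu : uniq (skew_boxes k lam mu).
Proof. exact: uniq_skew_cols. Qed.

Lemma size_skew_col lam mu i : subpart mu lam -> size (skew_col lam mu i) = `|lam i%:Z - mu i%:Z|%N.
Proof.
move=> sub; rewrite /skew_col (all_filterP _) ?size_map ?size_iota //.
apply/allP => p /mapP[t ht ->]; rewrite mem_iota in ht.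
by have := sub i%:Z; rewrite /in_skew /in_part /=; lia.
Qed.

Lemma col_le_nboxes lam mu i : subpart mu lam -> (i < k)%N ->
  (`|lam i%:Z - mu i%:Z| <= nboxes k lam mu)%N.
Proof.
move=> sub ik; rewrite -size_skew_col //; apply: uniq_leq_size.
  by have := uniq_skew_cols lam mu i 1; rewrite /= cats0.
by move=> c hc; apply/flattenP; exists (skew_col lam mu i) => //; apply/map_f; rewrite mem_iota.
Qed.

Lemma proj_id c : 0 <= c.1 -> c.1 < k%:Z -> proj c = c.
Proof.
case: c => x y /= h0 h1; rewrite /Defs.proj /= divz_small; last by rewrite h0 /=; lia.
by rewrite !mul0r subr0 addr0.
Qed.

Lemma proj_row_inj x1 x2 y : (k < n)%N -> proj (x1, y) = proj (x2, y) -> x1 = x2.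
Proof.
move=> k_lt_n; rewrite /Defs.proj /= => -[e1 /addrI e2].
have e3 : (x1 %/ k%:Z)%Z = (x2 %/ k%:Z)%Z by apply: (mulIf _ e2); lia.
by move: e1; rewrite e3 => /addIr.
Qed.

Lemma proj_eq_corner lam j q : cyl lam -> (j < k)%N ->
  (proj q == (j%:Z, lam j%:Z)) = ((q.1 %% k%:Z)%Z == j%:Z) && (q.2 == lam q.1).
Proof.
move=> c jk; case: q => x y; rewrite /Defs.proj /= xpair_eqE.
rewrite [in RHS](cylindric_modE x c) -/(modz x k%:Z).
by case: eqP => //= ->; apply/eqP/eqP => h; lia.
Qed.

Lemma remove_box_nat lam j (i : nat) : (i < k)%N ->
  remove_box lam j i%:Z = lam i%:Z - (i == j)%:R.
Proof. by move=> ik; rewrite /remove_box col_ind_nat. Qed.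

Lemma skew_col_remove_other lam mu j i : (i < k)%N -> i != j ->
  skew_col (remove_box lam j) mu i = skew_col lam mu i.
Proof.
move=> ik ne; rewrite /skew_col remove_box_nat // (negbTE ne) subr0.
apply: eq_in_filter => p /mapP[t _ ->].
by rewrite /in_skew /in_part /remove_box /= col_ind_other // subr0.
Qed.

Lemma skew_col_remove_corner lam mu j : (j < k)%N -> mu j%:Z < lam j%:Z ->
  skew_col lam mu j = rcons (skew_col (remove_box lam j) mu j) (j%:Z, lam j%:Z).
Proof.
move=> jk hj; rewrite /skew_col remove_box_nat // eqxx.
have -> : `|lam j%:Z - mu j%:Z|%N = (absz (lam j%:Z - 1 - mu j%:Z)%R + 1)%N by lia.
rewrite iotaD map_cat filter_cat /= add0n -cats1; congr (_ ++ _).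
  apply: eq_in_filter => p /mapP[t]; rewrite mem_iota => ht ->.
  by rewrite /in_skew /in_part /remove_box /= col_ind_self //; apply/idP/idP; lia.
have -> : mu j%:Z + (absz (lam j%:Z - 1 - mu j%:Z)%R).+1%:Z = lam j%:Z by lia.
by rewrite /in_skew /in_part /= lexx -ltNge hj.
Qed.

Lemma skew_boxes_remove_corner lam mu j : (j < k)%N -> mu j%:Z < lam j%:Z ->
  exists P S, skew_boxes k lam mu = P ++ (j%:Z, lam j%:Z) :: S /\
              skew_boxes k (remove_box lam j) mu = P ++ S.
Proof.
move=> jk hj.
have ik : iota 0 k = iota 0 j ++ j :: iota j.+1 (k - j.+1).
  have -> : k = (j + (k - j.+1).+1)%N by lia.
  by rewrite iotaD add0n; congr (_ ++ _ :: iota _ _); lia.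
have other a r : (a + r <= k)%N -> (j < a)%N || (a + r <= j)%N ->
    [seq skew_col (remove_box lam j) mu i | i <- iota a r] =
    [seq skew_col lam mu i | i <- iota a r].
  move=> ar out; apply/eq_in_map => i; rewrite mem_iota => hi.
  by apply: skew_col_remove_other; lia.
exists (flatten [seq skew_col lam mu i | i <- iota 0 j] ++ skew_col (remove_box lam j) mu j).
exists (flatten [seq skew_col lam mu i | i <- iota j.+1 (k - j.+1)]).
rewrite !skew_boxesE ik !map_cat !flatten_cat /= skew_col_remove_corner // -cats1 !other;
  try lia.
by rewrite -!catA.
Qed.

Lemma nboxes_remove_corner lam mu j : (j < k)%N -> mu j%:Z < lam j%:Z ->
  nboxes k lam mu = (nboxes k (remove_box lam j) mu).+1.
Proof.
move=> jk hj; have [P [S [e1 e2]]] := skew_boxes_remove_corner jk hj.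
by rewrite /nboxes e1 e2 !size_cat /= addnS.
Qed.

Lemma nboxes_eq0 lam mu : (0 < k)%N -> cyl lam -> cyl mu -> subpart mu lam ->
  nboxes k lam mu = 0%N -> lam = mu.
Proof.
move=> k_gt0 cl cm sub h; apply/funext => x; apply/eqP; rewrite eq_le sub andbT leNgt.
apply/negP; rewrite -subr_gt0 (cylindric_diff_mod x cl cm) subr_gt0 => hx.
have xk : (0 <= x %% k%:Z)%Z && (x %% k%:Z < k%:Z)%Z by rewrite modz_ge0 ?ltz_pmod; lia.
have ej : (absz (x %% k%:Z)%Z)%:Z = (x %% k%:Z)%Z by lia.
by rewrite -ej in hx; rewrite (nboxes_remove_corner _ hx) in h; lia.
Qed.

Lemma in_skew_remove_corner lam mu j q : cyl lam -> (j < k)%N ->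
  in_skew (remove_box lam j) mu q = in_skew lam mu q && (proj q != (j%:Z, lam j%:Z)).
Proof.
move=> cl jk; rewrite proj_eq_corner // /in_skew /in_part /remove_box /col_ind.
case: eqP => _ /=; last by rewrite subr0 andbT.
by move: (q.2) (lam q.1) (mu q.1) => a b c; apply/idP/idP; lia.
Qed.

Lemma not_in_skew_above_corner lam mu j x y1 y2 : cyl lam -> (j < k)%N ->
  proj (x, y1) = (j%:Z, lam j%:Z) -> y1 < y2 -> ~~ in_skew lam mu (x, y2).
Proof.
move=> cl jk /eqP; rewrite proj_eq_corner // => /andP[_ /eqP /= ->] lt.
by rewrite /in_skew /in_part /= leNgt lt.
Qed.

Lemma not_in_skew_right_corner lam mu j x1 x2 y : cyl lam -> (j < k)%N ->
  lam (j%:Z + 1) < lam j%:Z -> proj (x1, y) = (j%:Z, lam j%:Z) -> x1 < x2 ->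
  ~~ in_skew lam mu (x2, y).
Proof.
move=> cl jk hj /eqP; rewrite proj_eq_corner // => /andP[/eqP /= e1 /eqP /= ->] lt.
have desc : lam (x1 + 1) < lam x1.
  have -> : x1 = j%:Z + (x1 %/ k%:Z)%Z * k%:Z by rewrite {1}(divz_eq x1 k%:Z) e1 addrC.
  by rewrite cylindric_descent_shift.
have : lam x2 <= lam (x1 + 1) by apply: cylindric_le cl _; lia.
by rewrite /in_skew /in_part /=; apply/contraL => h; lia.
Qed.

Section StandardTableaux.
Variable N : nat.
Implicit Types (B : seq (int * int)) (isk : int * int -> bool) (R : {ffun 'I_N -> 'I_N}).

(* [standard_tableau] and [f_skew] with the list of boxes and the shape
   abstracted, see [f_skewE]. *)
Definition tab_entry B R (c : int * int) : nat :=
  if insub (index c B) is Some i then (R i).+1 else 0%N.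

Definition is_std B isk R : Prop :=
  injective R /\
  (forall x y1 y2 : int, isk (x, y1) -> isk (x, y2) -> y1 < y2 ->
     (tab_entry B R (proj (x, y1)) <= tab_entry B R (proj (x, y2)))%N) /\
  (forall x1 x2 y : int, isk (x1, y) -> isk (x2, y) -> x1 < x2 ->
     (tab_entry B R (proj (x1, y)) < tab_entry B R (proj (x2, y)))%N).

Definition count_std B isk := #|[set R | `[< is_std B isk R >]]|.

Lemma tab_entry_index B R c (h : (index c B < N)%N) : tab_entry B R c = (R (Ordinal h)).+1.
Proof. by rewrite /tab_entry insubT. Qed.

Lemma tab_entry_out B R c : ~~ (index c B < N)%N -> tab_entry B R c = 0%N.
Proof. by move=> h; rewrite /tab_entry insubN. Qed.

Lemma tab_entry_le B R c : (tab_entry B R c <= N)%N.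
Proof. by rewrite /tab_entry; case: insub. Qed.

Lemma tab_entry_inj B R c1 c2 : size B = N -> injective R ->
  c1 \in B -> c2 \in B -> tab_entry B R c1 = tab_entry B R c2 -> c1 = c2.
Proof.
move=> sB iR h1 h2.
have i1 : (index c1 B < N)%N by rewrite -sB index_mem.
have i2 : (index c2 B < N)%N by rewrite -sB index_mem.
rewrite (tab_entry_index _ i1) (tab_entry_index _ i2) => -[e].
have /(congr1 val) /= e2 := iR _ _ (val_inj e).
by rewrite -(nth_index c1 h1) -(nth_index c1 h2) e2.
Qed.

End StandardTableaux.

Lemma f_skewE lam mu :
  f_skew k n lam mu = count_std (nboxes k lam mu) (skew_boxes k lam mu) (in_skew lam mu).
Proof. by []. Qed.

Section RemoveMaximum.
Hypothesis k_lt_n : (k < n)%N.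
Variables (N : nat) (P S : seq (int * int)) (b : int * int).
Hypotheses (b_notin_P : b \notin P) (size_PS : size (P ++ S) = N).
Variables (isk isk' : int * int -> bool).
Hypothesis isk'E : forall q, isk' q = isk q && (proj q != b).
Hypothesis above_b : forall x y1 y2, proj (x, y1) = b -> y1 < y2 -> ~~ isk (x, y2).
Hypothesis right_b : forall x1 x2 y, proj (x1, y) = b -> x1 < x2 -> ~~ isk (x2, y).

Local Notation B := (P ++ b :: S).
Local Notation B' := (P ++ S).

Definition b_pos : 'I_N.+1 := inord (size P).

Lemma b_posE : b_pos = size P :> nat.
Proof. by rewrite /b_pos inordK //; move: size_PS; rewrite size_cat; lia. Qed.

Lemma index_b : index b B = size P.
Proof. by rewrite index_cat (negbTE b_notin_P) /= eqxx addn0. Qed.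

Lemma index_other c : c != b -> index c B = bump (size P) (index c B').
Proof.
move=> ne; rewrite !index_cat; case: ifP => hc.
  by rewrite /bump; have := index_mem c P; rewrite hc; case: leqP.
by rewrite /= eq_sym (negbTE ne) /bump leq_addr addnS add1n.
Qed.

Definition extends (R : {ffun 'I_N.+1 -> 'I_N.+1}) (R' : {ffun 'I_N -> 'I_N}) :=
  R b_pos = ord_max /\ forall i : 'I_N, R (lift b_pos i) = lift ord_max (R' i).

Lemma tab_entry_extends R R' c : extends R R' ->
  tab_entry B R c = if c == b then N.+1 else tab_entry B' R' c.
Proof.
move=> [Rb RR']; case: eqP => [->|/eqP ne].
  have hi : (index b B < N.+1)%N by rewrite index_b -b_posE.
  rewrite (tab_entry_index _ hi).
  have -> : Ordinal hi = b_pos by apply: val_inj; rewrite /= index_b b_posE.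
  by rewrite Rb.
case: (ltnP (index c B') N) => hx.
  have hi : (index c B < N.+1)%N.
    by rewrite index_other // /bump; case: (leqP (size P) (index c B')) => /= _; lia.
  rewrite (tab_entry_index _ hx) (tab_entry_index _ hi).
  have -> : Ordinal hi = lift b_pos (Ordinal hx).
    by apply: val_inj; rewrite /= index_other // b_posE.
  by rewrite RR' /= /bump; have := ltn_ord (R' (Ordinal hx)); case: leqP => //=; lia.
rewrite !tab_entry_out //; first by rewrite -leqNgt.
rewrite index_other // /bump -leqNgt; move: hx size_PS; rewrite size_cat.
by case: leqP => /= h; lia.
Qed.

Lemma is_std_restrict R R' : extends R R' -> is_std B isk R -> is_std B' isk' R'.
Proof.
move=> r [iR [hc hr]]; have tab q : isk' q -> tab_entry B R (proj q) = tab_entry B' R' (proj q).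
  by rewrite isk'E => /andP[_ ne]; rewrite (tab_entry_extends _ r) (negbTE ne).
split; [|split].
- by move=> i1 i2 e; apply: (@lift_inj _ b_pos); apply: iR; rewrite !r.2 e.
- move=> x y1 y2 h1 h2 lt; rewrite -!tab //.
  by apply: hc lt; [move: h1|move: h2]; rewrite isk'E => /andP[].
- move=> x1 x2 y h1 h2 lt; rewrite -!tab //.
  by apply: hr lt; [move: h1|move: h2]; rewrite isk'E => /andP[].
Qed.

Lemma is_std_extend R R' : extends R R' -> is_std B' isk' R' -> is_std B isk R.
Proof.
move=> r [iR [hc hr]]; split; [|split].
- move=> i1 i2; case: (unliftP b_pos i1) => [j1 ->|->]; case: (unliftP b_pos i2) => [j2 ->|->] //;
    rewrite ?r.1 ?r.2.
  + by move/lift_inj/iR => ->.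
  + by move/eqP; rewrite eq_sym (negbTE (neq_lift _ _)).
  + by move/eqP; rewrite (negbTE (neq_lift _ _)).
- move=> x y1 y2 h1 h2 lt; rewrite !(tab_entry_extends _ r).
  case: eqP => e1; case: eqP => e2 //.
  + by move: (above_b e1 lt); rewrite h2.
  + exact: leq_trans (tab_entry_le _ _ _) _.
  + by apply: hc lt; rewrite isk'E ?h1 ?h2; apply/eqP.
- move=> x1 x2 y h1 h2 lt; rewrite !(tab_entry_extends _ r).
  case: eqP => e1; case: eqP => e2.
  + by move: lt; rewrite (proj_row_inj k_lt_n (etrans e1 (esym e2))) ltxx.
  + by move: (right_b e1 lt); rewrite h2.
  + by rewrite ltnS tab_entry_le.
  + by apply: hr lt; rewrite isk'E ?h1 ?h2; apply/eqP.
Qed.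

Definition extend (R' : {ffun 'I_N -> 'I_N}) : {ffun 'I_N.+1 -> 'I_N.+1} :=
  [ffun i => if unlift b_pos i is Some i' then lift ord_max (R' i') else ord_max].

Lemma extend_extends R' : extends (extend R') R'.
Proof. by split => [|i]; rewrite ffunE ?unlift_none ?liftK. Qed.

Lemma extend_inj : injective extend.
Proof.
move=> R1 R2 e; apply/ffunP => i; apply: (@lift_inj _ ord_max).
by rewrite -(extend_extends R1).2 -(extend_extends R2).2 e.
Qed.

Lemma card_std_max_at :
  #|[set R : {ffun 'I_N.+1 -> 'I_N.+1} | `[< is_std B isk R >] && (R b_pos == ord_max)]|
  = count_std N B' isk'.
Proof.
rewrite /count_std -(card_imset _ extend_inj); apply: eq_card => R; rewrite !inE.
apply/andP/imsetP => [[/asboolP hR /eqP Rb]|[R' hR' ->]]; last first.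
  rewrite inE in hR'; split; last by rewrite (extend_extends R').1.
  exact/asboolP/(is_std_extend (extend_extends R'))/asboolP.
pose R' : {ffun 'I_N -> 'I_N} := [ffun i => odflt i (unlift ord_max (R (lift b_pos i)))].
have r : extends R R'.
  split => // i; rewrite ffunE.
  have ne : ord_max != R (lift b_pos i).
    by rewrite -Rb; apply/eqP => /hR.1 /eqP; rewrite (negbTE (neq_lift _ _)).
  by case: (unlift_some ne) => v -> ->.
exists R'; first by rewrite inE; apply/asboolP; exact: is_std_restrict hR.
apply/ffunP => i; case: (unliftP b_pos i) => [j ->|->].
  by rewrite (extend_extends R').2 r.2.
by rewrite (extend_extends R').1 r.1.
Qed.

End RemoveMaximum.

Lemma exists_box_ord_max N (B : seq (int * int)) (R : {ffun 'I_N.+1 -> 'I_N.+1}) :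
  size B = N.+1 -> uniq B -> injective R -> exists2 c, c \in B & R (inord (index c B)) = ord_max.
Proof.
move=> sB uB iR; have [g _ Rg] := injF_bij iR.
exists (nth (0, 0) B (g ord_max)); first by rewrite mem_nth // sB.
by rewrite index_uniq ?sB // inord_val Rg.
Qed.

Definition max_at lam mu N (R : {ffun 'I_N.+1 -> 'I_N.+1}) (j : nat) : bool :=
  [&& `[< cyl (remove_box lam j) >], mu j%:Z < lam j%:Z &
      R (inord (index (j%:Z, lam j%:Z) (skew_boxes k lam mu))) == ord_max].

Lemma corner_in_skew_boxes lam mu j : (j < k)%N -> mu j%:Z < lam j%:Z ->
  (j%:Z, lam j%:Z) \in skew_boxes k lam mu.
Proof. by move=> jk h; rewrite mem_skew_boxes /in_skew /in_part /= lexx -ltNge h !andbT; lia. Qed.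

Lemma max_at_uniq lam mu N (R : {ffun 'I_N.+1 -> 'I_N.+1}) j1 j2 :
  nboxes k lam mu = N.+1 -> injective R -> (j1 < k)%N -> (j2 < k)%N ->
  max_at lam mu R j1 -> max_at lam mu R j2 -> j1 = j2.
Proof.
move=> hN iR jk1 jk2 /and3P[_ h1 /eqP e1] /and3P[_ h2 /eqP e2].
have m1 := corner_in_skew_boxes jk1 h1; have m2 := corner_in_skew_boxes jk2 h2.
move: (iR _ _ (etrans e1 (esym e2))) => /(congr1 val) /=.
rewrite !inordK -?hN ?index_mem // => /(congr1 (nth (0, 0) (skew_boxes k lam mu))).
by rewrite !nth_index // => -[]; lia.
Qed.

Section MaximalEntry.
Hypotheses (k_gt0 : (0 < k)%N) (k_lt_n : (k < n)%N).
Variables (lam mu : int -> int) (N : nat) (R : {ffun 'I_N.+1 -> 'I_N.+1}).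
Hypotheses (cl : cyl lam) (cm : cyl mu) (size_B : nboxes k lam mu = N.+1).
Hypothesis std_R : is_std (skew_boxes k lam mu) (in_skew lam mu) R.

Local Notation B := (skew_boxes k lam mu).

Lemma tab_entry_ord_max c : c \in B -> R (inord (index c B)) = ord_max -> tab_entry B R c = N.+1.
Proof.
move=> cB Rc; have hi : (index c B < N.+1)%N by rewrite -size_B index_mem.
rewrite (tab_entry_index _ hi).
have -> : Ordinal hi = inord (index c B) by apply: val_inj; rewrite /= inordK.
by rewrite Rc.
Qed.

Lemma std_max_top x y : (x, y) \in B -> tab_entry B R (x, y) = N.+1 -> y = lam x.
Proof.
move=> cB tc; move: (cB); rewrite mem_skew_boxes /= => /and3P[x0 xk sxy].
move: (sxy); rewrite /in_skew /in_part /= => /andP[ylam ymu].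
apply/eqP; rewrite eq_le ylam leNgt /=; apply/negP => lt.
have s' : in_skew lam mu (x, y + 1) by rewrite /in_skew /in_part /=; apply/andP; split; lia.
have cB' : (x, y + 1) \in B by rewrite mem_skew_boxes s' x0 xk.
have := std_R.2.1 x y (y + 1) sxy s' (ltrDl y 1); rewrite !proj_id // tc => le.
have e : tab_entry B R (x, y) = tab_entry B R (x, y + 1).
  by apply/eqP; rewrite tc eqn_leq le tab_entry_le.
by have [] := tab_entry_inj size_B std_R.1 cB cB' e; lia.
Qed.

Lemma std_max_removable x y : (x, y) \in B -> tab_entry B R (x, y) = N.+1 ->
  lam (x + 1) < lam x.
Proof.
move=> cB tc; have ey := std_max_top cB tc; subst y.
move: (cB); rewrite mem_skew_boxes /= => /and3P[x0 xk sxy].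
rewrite ltNge; apply/negP => hle.
have s' : in_skew lam mu (x + 1, lam x).
  have : mu (x + 1) <= mu x by apply: cylindric_le cm _; lia.
  by move: sxy; rewrite /in_skew /in_part /= hle; lia.
have := std_R.2.2 x (x + 1) (lam x) sxy s' (ltrDl x 1); rewrite proj_id // tc.
by rewrite ltnNge tab_entry_le.
Qed.

Lemma max_at_exists : exists2 j, (j < k)%N & max_at lam mu R j.
Proof.
have [[x y] cB Rc] := exists_box_ord_max size_B (uniq_skew_boxes lam mu) std_R.1.
have tc := tab_entry_ord_max cB Rc.
have desc := std_max_removable cB tc; have ey := std_max_top cB tc; subst y.
move: (cB); rewrite mem_skew_boxes /in_skew /in_part /= => /and4P[x0 xk _ ymu].
have xj : x = (absz x)%:Z by lia.
exists (absz x); first lia.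
rewrite /max_at -xj Rc eqxx andbT; apply/andP; split; last lia.
by apply/asboolP/cylindric_remove_box => //; [lia | rewrite -xj].
Qed.

End MaximalEntry.

Section Recursion.
Hypotheses (k_gt0 : (0 < k)%N) (k_lt_n : (k < n)%N).

Lemma card_std_max_at_corner lam mu j N : cyl lam -> (j < k)%N -> nboxes k lam mu = N.+1 ->
  #|[set R : {ffun 'I_N.+1 -> 'I_N.+1} |
      `[< is_std (skew_boxes k lam mu) (in_skew lam mu) R >] && max_at lam mu R j]| =
  if `[< cyl (remove_box lam j) >] && (mu j%:Z < lam j%:Z) then f_skew k n (remove_box lam j) mu
  else 0%N.
Proof.
move=> cl jk hN; case: ifP => [/andP[/asboolW rj hj]|hn]; last first.
  by apply: eq_card0 => R; rewrite !inE /max_at [in X in _ && X]andbA hn andbF.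
have [P [S [e1 e2]]] := skew_boxes_remove_corner jk hj.
have b_notin_P : (j%:Z, lam j%:Z) \notin P.
  by have := uniq_skew_boxes lam mu; rewrite e1 cat_uniq /= => /and3P[_ /norP[]].
have size_PS : size (P ++ S) = N by move: hN; rewrite /nboxes e1 !size_cat /= addnS => -[].
have hN' : nboxes k (remove_box lam j) mu = N by rewrite /nboxes e2.
have removable := (cylindric_remove_box k_gt0 k_lt_n cl jk).1 rj.
rewrite f_skewE hN' e2 -(card_std_max_at k_lt_n b_notin_P size_PS
  (fun q => in_skew_remove_corner mu q cl jk) (fun x y1 y2 => not_in_skew_above_corner mu cl jk)
  (fun x1 x2 y => not_in_skew_right_corner mu cl jk removable)).
by apply: eq_card => R; rewrite !inE /max_at (asboolT rj) hj e1 index_b.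
Qed.

Lemma f_skew_rec lam mu N : cyl lam -> cyl mu -> nboxes k lam mu = N.+1 ->
  f_skew k n lam mu =
  \sum_(j < k | `[< cyl (remove_box lam j) >] && (mu j%:Z < lam j%:Z))
     f_skew k n (remove_box lam j) mu.
Proof.
move=> cl cm hN; rewrite f_skewE /count_std hN.
set B := skew_boxes k lam mu; set isk := in_skew lam mu.
transitivity (\sum_(R : {ffun 'I_N.+1 -> 'I_N.+1} | `[< is_std B isk R >])
                 \sum_(j < k) (max_at lam mu R j : nat))%N.
  rewrite -sum1dep_card; apply: eq_bigr => R /asboolP hR.
  have [j0 jk0 a0] := max_at_exists k_gt0 k_lt_n cl cm hN hR.
  rewrite (bigD1 (Ordinal jk0)) //= a0 big1 // => j ne; apply/eqP; rewrite eqb0.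
  by apply: contra ne => aj; apply/eqP/val_inj/(max_at_uniq hN hR.1 (ltn_ord j) jk0 aj a0).
rewrite exchange_big [RHS]big_mkcond /=; apply: eq_bigr => j _.
rewrite -(card_std_max_at_corner (N := N)) // -sum1dep_card [RHS]big_mkcondr.
by apply: eq_bigr => R _; case: max_at.
Qed.

End Recursion.

Section SkewSums.
Hypotheses (k_gt0 : (0 < k)%N) (k_lt_n : (k < n)%N).
Local Open Scope classical_set_scope.

Definition lower_shapes alpha m :=
  [set mu | cyl mu /\ subpart mu alpha /\ nboxes k alpha mu = m].
Definition upper_shapes alpha m :=
  [set lam | cyl lam /\ subpart alpha lam /\ nboxes k lam alpha = m].

(* A cylindric partition is determined by its values on one period. *)
Lemma finite_cylindric_near alpha m (A : set (int -> int)) : cyl alpha ->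
  (forall nu, A nu -> cyl nu /\ forall i, (i < k)%N -> (`|nu i%:Z - alpha i%:Z| <= m)%N) ->
  finite_set A.
Proof.
move=> ca hA.
pose h (t : {ffun 'I_k -> 'I_(m + m).+1}) (x : int) : int :=
  alpha x + (if insub (absz (x %% k%:Z)%Z) is Some i then (t i : nat)%:Z else 0) - m%:Z.
apply: (sub_finite_set _ (finite_image h (@finite_finset _ setT))) => nu /hA [cn hb].
exists [ffun i : 'I_k => inord (absz (nu i%:Z - alpha i%:Z + m%:Z)%R)] => //.
apply/funext => x; rewrite /h.
have x_mod : (0 <= x %% k%:Z)%Z && (x %% k%:Z < k%:Z)%Z by rewrite modz_ge0 ?ltz_pmod; lia.
have hx : (absz (x %% k%:Z)%Z < k)%N by lia.
have ex : (absz (x %% k%:Z)%Z)%:Z = (x %% k%:Z)%Z by lia.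
have := hb _ hx; rewrite insubT ffunE /= ex => hbx; rewrite inordK; last by lia.
by have := cylindric_diff_mod x cn ca; lia.
Qed.

Lemma finite_lower_shapes alpha m : cyl alpha -> finite_set (lower_shapes alpha m).
Proof.
move=> ca; apply: (finite_cylindric_near (m := m) ca) => mu [cm [sub hm]].
by split => // i ik; have := col_le_nboxes sub ik; rewrite hm; lia.
Qed.

Lemma finite_upper_shapes alpha m : cyl alpha -> finite_set (upper_shapes alpha m).
Proof.
move=> ca; apply: (finite_cylindric_near (m := m) ca) => lam [cl [sub hm]].
by split => // i ik; have := col_le_nboxes sub ik; rewrite hm; lia.
Qed.

Lemma nboxes_id lam : nboxes k lam lam = 0%N.
Proof.
by rewrite /nboxes skew_boxesE; elim: (iota 0 k) => //= i s IH; rewrite size_cat IH /skew_col subrr.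
Qed.

Lemma f_skew_id lam : f_skew k n lam lam = 1%N.
Proof.
rewrite f_skewE /count_std nboxes_id (eq_card (B := predT)); first by rewrite card_ffun !card_ord.
move=> R; rewrite !inE; apply/asboolP; split; [|split].
- by case.
- by move=> x y1 y2; rewrite /in_skew /in_part /= andbN.
- by move=> x1 x2 y; rewrite /in_skew /in_part /= andbN.
Qed.

Lemma lower_shapes0 alpha : cyl alpha -> lower_shapes alpha 0 = [set alpha].
Proof.
move=> ca; apply/seteqP; split => mu /=.
  by move=> [cm [sub hN]]; rewrite (nboxes_eq0 k_gt0 ca cm sub hN).
by move=> ->; split; [|split; [move=> x|exact: nboxes_id]].
Qed.

Lemma upper_shapes0 alpha : cyl alpha -> upper_shapes alpha 0 = [set alpha].
Proof.
move=> ca; apply/seteqP; split => lam /=.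
  by move=> [cl [sub hN]]; rewrite (nboxes_eq0 k_gt0 cl ca sub hN).
by move=> ->; split; [|split; [move=> x|exact: nboxes_id]].
Qed.

Lemma in_set_predE (T : Type) (p : pred T) x : (x \in [set y | p y]) = p x.
Proof. by apply/idP/idP => [/set_mem|/mem_set]. Qed.

Lemma exchange_fsbig_ord (T : choiceType) (A : set T) (F : T -> 'I_k -> nat) : finite_set A ->
  (\sum_(x \in A) \sum_(j < k) F x j = \sum_(j < k) \sum_(x \in A) F x j)%N.
Proof.
move=> fA; rewrite fsbig_finite //; under [RHS]eq_bigr do rewrite fsbig_finite //.
exact: exchange_big.
Qed.

Lemma subpart_remove_box alpha mu j : cyl alpha -> cyl mu -> subpart mu alpha ->
  mu j%:Z < alpha j%:Z -> subpart mu (remove_box alpha j).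
Proof.
move=> ca cm sub hj x; rewrite /remove_box /col_ind; case: eqP => e; last by rewrite subr0.
by have := cylindric_diff_mod x ca cm; rewrite e; have := sub x; lia.
Qed.

Lemma subpart_remove_boxW alpha j mu : subpart mu (remove_box alpha j) -> subpart mu alpha.
Proof. by move=> h x; have := h x; rewrite /remove_box; case: (col_indP j x) => ->; lia. Qed.

Lemma subpart_add_box alpha j lam : subpart alpha lam -> subpart alpha (add_box lam j).
Proof. by move=> h x; have := h x; rewrite /add_box; case: (col_indP j x) => ->; lia. Qed.

Lemma lower_shapes_remove_corner alpha j m : cyl alpha -> (j < k)%N ->
  cyl (remove_box alpha j) ->
  lower_shapes alpha m.+1 `&` [set mu | mu j%:Z < alpha j%:Z] =
  lower_shapes (remove_box alpha j) m.
Proof.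
move=> ca jk cr; apply/seteqP; split => mu /=.
  move=> [[cm [sub hN]] hj]; split => //; split; first exact: subpart_remove_box.
  by have := nboxes_remove_corner jk hj; rewrite hN => -[].
move=> [cm [sub hN]].
have hj : mu j%:Z < alpha j%:Z by have := sub j%:Z; rewrite /remove_box col_ind_self //; lia.
split => //; split => //; split; first exact: subpart_remove_boxW sub.
by rewrite (nboxes_remove_corner jk hj) hN.
Qed.

Lemma upper_shapes_add_box alpha j m : cyl alpha -> (j < k)%N ->
  add_box^~ j @` (upper_shapes alpha m `&` [set lam | `[< cyl (add_box lam j) >]]) =
  upper_shapes alpha m.+1 `&`
    [set lam | `[< cyl (remove_box lam j) >] && (alpha j%:Z < lam j%:Z)].
Proof.
move=> ca jk; apply/seteqP; split => lam /=.
  move=> [l [[cl [sub hN]] /asboolP ca'] <-].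
  have hj : alpha j%:Z < add_box l j j%:Z.
    by rewrite /add_box col_ind_self //; have := sub j%:Z; lia.
  split; last by rewrite add_boxK hj andbT; exact: asboolT.
  split => //; split; first exact: subpart_add_box.
  by rewrite (nboxes_remove_corner jk hj) add_boxK hN.
move=> [[cl [sub hN]] /andP[/asboolP cr hj]].
exists (remove_box lam j); last exact: remove_boxK.
split; last by rewrite remove_boxK; exact: asboolT.
split => //; split; first exact: subpart_remove_box.
by have := nboxes_remove_corner jk hj; rewrite hN => -[].
Qed.

Lemma sum_f_skew_lower alpha m : cyl alpha ->
  (\sum_(mu \in lower_shapes alpha m) f_skew k n alpha mu)%N = iter m down (fun=> 1%N) alpha.
Proof.
elim: m alpha => [|m IH] alpha ca; first by rewrite lower_shapes0 // fsbig_set1 f_skew_id.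
rewrite (eq_fsbigr (fun mu => \sum_(j < k) if `[< cyl (remove_box alpha j) >] &&
    (mu j%:Z < alpha j%:Z) then f_skew k n (remove_box alpha j) mu else 0%N)); last first.
  by move=> mu /set_mem [cm [_ hN]]; rewrite (f_skew_rec k_gt0 k_lt_n ca cm hN) big_mkcond.
rewrite exchange_fsbig_ord; last exact: finite_lower_shapes.
rewrite iterS /down [RHS]big_mkcond; apply: eq_bigr => j _.
case: (asboolP (cyl (remove_box alpha j))) => cr /=; last by rewrite fsbig1.
rewrite -IH // -(lower_shapes_remove_corner _ ca (ltn_ord j) cr) [RHS]fsbig_mkcondr.
by apply: eq_fsbigr => mu _; rewrite in_set_predE.
Qed.

Lemma sum_f_skew_upper alpha m phi : cyl alpha ->
  (\sum_(lam \in upper_shapes alpha m) f_skew k n lam alpha * phi lam)%N = iter m up phi alpha.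
Proof.
elim: m phi alpha => [|m IH] phi alpha ca.
  by rewrite upper_shapes0 // fsbig_set1 f_skew_id mul1n.
rewrite iterSr -IH //.
rewrite (eq_fsbigr (fun lam => \sum_(j < k)
    if `[< cyl (remove_box lam j) >] && (alpha j%:Z < lam j%:Z)
    then f_skew k n (remove_box lam j) alpha * phi lam else 0%N)); last first.
  move=> lam /set_mem [cl [_ hN]]; rewrite (f_skew_rec k_gt0 k_lt_n cl ca hN) big_mkcond big_distrl.
  by apply: eq_bigr => j _; case: ifP.
rewrite [RHS](eq_fsbigr (fun lam => \sum_(j < k) if `[< cyl (add_box lam j) >]
    then f_skew k n lam alpha * phi (add_box lam j) else 0%N)); last first.
  move=> lam _; rewrite /up big_mkcond big_distrr.
  by apply: eq_bigr => j _; case: ifP => // _; exact: muln0.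
rewrite !exchange_fsbig_ord; try exact: finite_upper_shapes.
apply: eq_bigr => j _.
under eq_fsbigr => lam _ do rewrite -[_ && _](in_set_predE
  (fun lam => `[< cyl (remove_box lam j) >] && (alpha j%:Z < lam j%:Z))).
under [RHS]eq_fsbigr => lam _ do rewrite -[`[< _ >]](in_set_predE
  (fun lam => `[< cyl (add_box lam j) >])).
rewrite -!fsbig_mkcondr -(upper_shapes_add_box _ ca (ltn_ord j)) fsbig_image.
  by apply: eq_fsbigr => lam _; rewrite add_boxK.
by move=> a b _ _; apply: add_box_inj.
Qed.

End SkewSums.

End CylindricTableaux.

Unset Implicit Arguments.
Local Open Scope classical_set_scope.

Theorem mainTheorem7 (k n : nat) (hk : (1 <= k)%N) (hkn : (k < n)%N)
  (alpha : int -> int) (halpha : cylindric k n alpha) (m : nat) :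
  (\sum_(mu \in [set mu | cylindric k n mu /\ subpart mu alpha /\ nboxes k alpha mu = m])
      f_skew k n alpha mu)%N
  = (\sum_(lam \in [set lam | cylindric k n lam /\ subpart alpha lam /\ nboxes k lam alpha = m])
      f_skew k n lam alpha)%N.
Proof.
rewrite (sum_f_skew_lower hk hkn m halpha) (iter_down_up1 hk hkn m halpha).
rewrite -(sum_f_skew_upper hk hkn m (fun=> 1%N) halpha).
by apply: eq_fsbigr => lam _; rewrite muln1.
Qed.
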